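(* For an integer $i\ge0$ let $i_0i_1i_2\dots$ be its base-3 digits, least significant first. Define $w_i=-1$ if the first digit in this sequence different from $1$ is $2$, and $w_i=1$ otherwise; define $a_i=3^{m}$, where $m$ is the number of initial digits equal to $1$, i.e. the largest $m\ge0$ with $i_0=\dots=i_{m-1}=1$. Let $p_0=0$ and $p_n=\sum_{i=0}^{n-1}w_ia_i$ for $n\ge1$. Let $N_2$ be the set of non-negative integers whose base-3 representation does not use the digit $2$, and for $n\ge0$ let $\ell_n=\ell_n^++\ell_n^-$, where $\ell_n^+,\ell_n^-$ are the unique non-negative integers with $\ell_n^+,\ell_n^-,\ell_n^++\ell_n^-\in N_2$ and $n=\ell_n^+-\ell_n^-$. Then $p_n=\ell_n$ for all $n\ge0$.
   Context: The sequence $(w_i)$ is the sequence $1,1,-1,1,1,-1,1,-1,-1,\dots$ (the final-state output of a ternary automaton), and $(a_i)$ is the sequence $1,3,1,1,9,1,\dots$ (a transducer integer sequence); the definitions above are the explicit descriptions of these. *)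

From mathcomp Require Import all_boot all_order all_algebra.
Set Implicit Arguments. Unset Strict Implicit. Unset Printing Implicit Defensive.
Import Order.TTheory GRing.Theory Num.Theory.

Definition digit3 (x k : nat) : nat := (x %/ 3 ^ k) %% 3.

(* number of initial (least significant) base-3 digits equal to 1, computed
   with fuel; fuel i.+1 suffices since x %/ 3 < x for x > 0 and digit of 0 is 0 *)
Fixpoint ones_fuel (f x : nat) : nat :=
  match f with
  | 0 => 0
  | f'.+1 => if x %% 3 == 1 then (ones_fuel f' (x %/ 3)).+1 else 0
  end.

Definition ones3 (i : nat) : nat := ones_fuel i.+1 i.

Definition w (i : nat) : int := if digit3 i (ones3 i) == 2 then (-1)%R else 1%R.

Definition a (i : nat) : int := (3 ^ ones3 i)%:Z.

Definition p (n : nat) : int := (\sum_(i < n) w i * a i)%R.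

Definition N2 (x : nat) : Prop := forall k : nat, digit3 x k <> 2.

From mathcomp Require Import all_boot all_order all_algebra.
From mathcomp Require Import zify ring.

Set Implicit Arguments.
Unset Strict Implicit.
Unset Printing Implicit Defensive.
Import Order.TTheory GRing.Theory Num.Theory.

(** Both sides satisfy f 0 = 0, f (3m) = 3 f m, f (3m+1) = 3 f m + 1 and
   f (3m+2) = 3 f (m+1) + 1, hence agree.  For [p], the summands [w i * a i]
   over the block 3m, 3m+1, 3m+2 are 1, 3 (w m * a m) and -1.  For the
   representation n = l+ - l-, the last digits of l+ and l- form one of the
   pairs (0,0), (1,0), (0,1) (their sum is a digit of l+ + l-, so is not 2);
   the pair is determined by n mod 3, and stripping it leaves a
   representation of m, m or m+1 respectively. *)

Variant mod3_spec : nat -> Set :=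
| Mod3_0 m : mod3_spec (3 * m)
| Mod3_1 m : mod3_spec (3 * m + 1)
| Mod3_2 m : mod3_spec (3 * m + 2).

Lemma mod3P n : mod3_spec n.
Proof.
have n_eq : n = 3 * (n %/ 3) + n %% 3 by lia.
have : n %% 3 < 3 by lia.
move: (n %/ 3) (n %% 3) n_eq => m [|[|[|r]]] // -> _; last exact: Mod3_2.
  by rewrite addn0; exact: Mod3_0.
exact: Mod3_1.
Qed.

Lemma digit3_mul3D0 x r : r < 3 -> digit3 (3 * x + r) 0 = r.
Proof. by rewrite /digit3 expn0 divn1; lia. Qed.

Lemma digit3_mul3DS x r k : r < 3 -> digit3 (3 * x + r) k.+1 = digit3 x k.
Proof.
by move=> r_lt3; rewrite /digit3 expnS divnMA; congr (_ %/ _ %% 3); lia.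
Qed.

Lemma N2_0 : N2 0.
Proof. by move=> k; rewrite /digit3 div0n mod0n. Qed.

Lemma N2_mul3D x r : r < 3 -> N2 (3 * x + r) <-> r <= 1 /\ N2 x.
Proof.
move=> r_lt3; split=> [Nxr | [r_le1 Nx] [|k]].
- split; first by have := Nxr 0; rewrite digit3_mul3D0; lia.
  by move=> k; rewrite -(digit3_mul3DS x k r_lt3).
- by rewrite digit3_mul3D0; lia.
- by rewrite digit3_mul3DS.
Qed.

Lemma N2_mul3D_le1 x r : r <= 1 -> N2 x -> N2 (3 * x + r).
Proof.
move=> r_le1 Nx; have r_lt3 : r < 3 by lia.
by apply/(N2_mul3D x r_lt3).
Qed.

Lemma N2_base3 x : N2 x -> exists a r, [/\ x = 3 * a + r, r <= 1 & N2 a].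
Proof.
move=> Nx; exists (x %/ 3), (x %% 3).
have x_eq : x = 3 * (x %/ 3) + x %% 3 by lia.
have [r_le1 Nq] : x %% 3 <= 1 /\ N2 (x %/ 3).
  by apply/(N2_mul3D (x %/ 3) (ltn_pmod x (isT : 0 < 3))); rewrite -x_eq.
by split.
Qed.

Lemma ones_fuel_eq f1 f2 x : x < f1 -> x < f2 -> ones_fuel f1 x = ones_fuel f2 x.
Proof.
elim: f1 f2 x => [|f1 IH] [|f2] x //= x_lt1 x_lt2.
by case: ifP => // /eqP x_mod3; congr S; apply: IH; lia.
Qed.

Lemma ones3_mul3D q r : r < 3 -> r != 1 -> ones3 (3 * q + r) = 0.
Proof. by move=> r_lt3 r_neq1; rewrite /ones3 /=; case: ifP => // /eqP; lia. Qed.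

Lemma ones3_mul3_1 q : ones3 (3 * q + 1) = (ones3 q).+1.
Proof.
rewrite /ones3 [ones_fuel _ _]/= ifT; last lia.
by congr S; rewrite (_ : (3 * q + 1) %/ 3 = q); [apply: ones_fuel_eq | ]; lia.
Qed.

Lemma wa_mul3 q : (w (3 * q) * a (3 * q) = 1)%R.
Proof. by rewrite /w /a -[3 * q]addn0 ones3_mul3D // digit3_mul3D0. Qed.

Lemma wa_mul3_1 q : (w (3 * q + 1) * a (3 * q + 1) = 3 * (w q * a q))%R.
Proof.
by rewrite /w /a ones3_mul3_1 digit3_mul3DS // expnS PoszM; case: ifP => _; ring.
Qed.

Lemma wa_mul3_2 q : (w (3 * q + 2) * a (3 * q + 2) = -1)%R.
Proof. by rewrite /w /a ones3_mul3D // digit3_mul3D0. Qed.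

Lemma p0 : p 0 = 0%R.
Proof. by rewrite /p big_ord0. Qed.

Lemma pS n : p n.+1 = (p n + w n * a n)%R.
Proof. by rewrite /p big_ord_recr. Qed.

Lemma p_mul3 m : p (3 * m) = (3 * p m)%R.
Proof.
elim: m => [|m IH]; first by rewrite muln0 p0 mulr0.
have -> : 3 * m.+1 = (3 * m).+3 by lia.
rewrite !pS -[(3 * m).+2]addn2 -[(3 * m).+1]addn1.
by rewrite wa_mul3 wa_mul3_1 wa_mul3_2 IH; ring.
Qed.

Lemma p_mul3_1 m : p (3 * m + 1) = (3 * p m + 1)%R.
Proof. by rewrite addn1 pS wa_mul3 p_mul3. Qed.

Lemma p_mul3_2 m : p (3 * m + 2) = (3 * p m.+1 + 1)%R.
Proof.
have := p_mul3 m.+1; have -> : 3 * m.+1 = (3 * m + 2).+1 by lia.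
by rewrite pS wa_mul3_2 => <-; ring.
Qed.

Definition N2_repr (n lp lm : nat) : Prop :=
  N2 lp /\ N2 lm /\ N2 (lp + lm) /\ n + lm = lp.

Lemma N2_repr_base3 n lp lm : N2_repr n lp lm <->
  exists m a b r s, [/\ N2_repr m a b, r + s <= 1, lp = 3 * a + r,
                        lm = 3 * b + s & n + s = 3 * m + r].
Proof.
split=> [[Nlp [Nlm [Nsum n_eq]]] | [m [a [b [r [s [rep rs_le1 -> -> n_eq]]]]]]].
- have [a [r [lp_eq r_le1 Na]]] := N2_base3 Nlp.
  have [b [s [lm_eq s_le1 Nb]]] := N2_base3 Nlm.
  have sum_eq : lp + lm = 3 * (a + b) + (r + s) by lia.
  have [rs_le1 Nab] : r + s <= 1 /\ N2 (a + b).
    have rs_lt3 : r + s < 3 by lia.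
    by apply/(N2_mul3D (a + b) rs_lt3); rewrite -sum_eq.
  by exists (a - b), a, b, r, s; split=> //; [do !split => // | ]; lia.
- case: rep => [Na [Nb [Nab m_eq]]].
  have sum_eq : 3 * a + r + (3 * b + s) = 3 * (a + b) + (r + s) by lia.
  rewrite /N2_repr sum_eq.
  by do !split; try apply: N2_mul3D_le1; try lia.
Qed.

Lemma N2_repr0 lp lm : N2_repr 0 lp lm -> lp = 0 /\ lm = 0.
Proof.
elim/ltn_ind: lp lm => lp IH lm.
move=> /N2_repr_base3[m [a [b [r [s [rep rs_le1 lp_eq lm_eq n_eq]]]]]].
have [m0 [r0 s0]] : m = 0 /\ r = 0 /\ s = 0 by lia.
subst m r s; have [a0 | a_gt0] := posnP a.
  by case: rep => [_ [_ [_ ]]]; lia.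
by have [] := IH a _ b rep; lia.
Qed.

Lemma N2_repr_uniq n lp lm lp' lm' :
  N2_repr n lp lm -> N2_repr n lp' lm' -> lp = lp' /\ lm = lm'.
Proof.
elim/ltn_ind: n lp lm lp' lm' => n IH lp lm lp' lm'.
have [-> | n_gt0] := posnP n.
  by move=> /N2_repr0[-> ->] /N2_repr0[-> ->].
move=> /N2_repr_base3[m [a [b [r [s [rep rs_le1 lp_eq lm_eq n_eq]]]]]].
move=> /N2_repr_base3[m' [a' [b' [r' [s' [rep' rs_le1' lp_eq' lm_eq' n_eq']]]]]].
have [m_eq [r_eq s_eq]] : m' = m /\ r' = r /\ s' = s by lia.
subst m' r' s'.
by have [] := IH m _ a b a' b' rep rep'; lia.
Qed.

Lemma exists_N2_repr_p n : exists lp lm, N2_repr n lp lm /\ p n = Posz (lp + lm).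
Proof.
elim/ltn_ind: n => n IH; case: (mod3P n) IH => m IH.
- have [-> | m_gt0] := posnP m.
    by exists 0, 0; rewrite p0; do !split; exact: N2_0.
  have /IH[a [b [rep pm]]] : m < 3 * m by lia.
  exists (3 * a), (3 * b); split; last by rewrite p_mul3 pm; lia.
  by apply/N2_repr_base3; exists m, a, b, 0, 0; split=> //; lia.
- have /IH[a [b [rep pm]]] : m < 3 * m + 1 by lia.
  exists (3 * a + 1), (3 * b); split; last by rewrite p_mul3_1 pm; lia.
  by apply/N2_repr_base3; exists m, a, b, 1, 0; split=> //; lia.
- have /IH[a [b [rep pm]]] : m.+1 < 3 * m + 2 by lia.
  exists (3 * a), (3 * b + 1); split; last by rewrite p_mul3_2 pm; lia.
  by apply/N2_repr_base3; exists m.+1, a, b, 0, 1; split=> //; lia.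
Qed.

Theorem mainTheorem7 :
  forall n : nat,
    exists lp lm : nat,
      (N2 lp /\ N2 lm /\ N2 (lp + lm) /\ n + lm = lp) /\
      (forall lp' lm' : nat,
          N2 lp' -> N2 lm' -> N2 (lp' + lm') -> n + lm' = lp' ->
          lp' = lp /\ lm' = lm) /\
      p n = Posz (lp + lm).
Proof.
move=> n; have [lp [lm [rep p_eq]]] := exists_N2_repr_p n.
exists lp, lm; split=> //; split=> // lp' lm' Nlp' Nlm' Nsum' n_eq'.
have rep' : N2_repr n lp' lm' by [].
exact: N2_repr_uniq rep' rep.
Qed.
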